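(* For all $t\ge1$, $r\in[-1,1]$ and $w\in\mathbb{R}^3\setminus\{0\}$ we have $\kappa(a_tu_rw)\ge 1$ if $\kappa(w)\ge e^{-2t}$, and $\kappa(a_tu_rw)\ge e^{2t}\kappa(w)$ if $\kappa(w)<e^{-2t}$. Furthermore, if $\kappa(a_tu_rw)<1$ then $\kappa(a_tu_rw)=e^{2t}\kappa(w)$.
   Context: $Q_0(v)=v_2^2-2v_1v_3$, $a_t=\mathrm{diag}(e^t,1,e^{-t})$, $u_r=\begin{pmatrix}1&r&r^2/2\\0&1&r\\0&0&1\end{pmatrix}$. For $w=(w_1,w_2,w_3)\ne0$: if $w_2=w_3=0$, set $\rho(w)=\infty$, $\kappa_0(w)=\infty$, $\kappa(w)=1$. Otherwise $\rho(w)=-w_2/w_3\in[-\infty,\infty]$, $\kappa_0(w)=Q_0(w)/w_3^2\in[-\infty,\infty]$, and $\kappa(w)=|\kappa_0(w)|$ if $|\kappa_0(w)|<1$ and $|\rho(w)|<2$, while $\kappa(w)=1$ otherwise. *)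

From Stdlib Require Import Reals.
From Coquelicot Require Import Coquelicot.
Open Scope R_scope.

Definition vec3 := (R * R * R)%type.
Definition v1 (w : vec3) : R := fst (fst w).
Definition v2 (w : vec3) : R := snd (fst w).
Definition v3 (w : vec3) : R := snd w.

Definition Q0 (w : vec3) : R := v2 w ^ 2 - 2 * v1 w * v3 w.

(* a_t = diag(e^t, 1, e^{-t}) acting on column vectors *)
Definition a_act (t : R) (w : vec3) : vec3 :=
  (exp t * v1 w + 0 * v2 w + 0 * v3 w,
   0 * v1 w + 1 * v2 w + 0 * v3 w,
   0 * v1 w + 0 * v2 w + exp (- t) * v3 w).

(* u_r = [[1, r, r^2/2], [0, 1, r], [0, 0, 1]] acting on column vectors *)
Definition u_act (r : R) (w : vec3) : vec3 :=
  (1 * v1 w + r * v2 w + (r ^ 2 / 2) * v3 w,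
   0 * v1 w + 1 * v2 w + r * v3 w,
   0 * v1 w + 0 * v2 w + 1 * v3 w).

(* rho(w) = -w2/w3 in [-oo, +oo] (defined when (w2,w3) <> (0,0));
   when w3 = 0 (so w2 <> 0) the quotient is infinite, with sign -sign(w2). *)
Definition rho (w : vec3) : Rbar :=
  if Req_EM_T (v3 w) 0 then
    (if Rlt_dec 0 (v2 w) then m_infty else p_infty)
  else Finite (- v2 w / v3 w).

(* kappa_0(w) = Q0(w)/w3^2 in [-oo, +oo]; when w3 = 0 (and w2 <> 0),
   Q0(w) = w2^2 > 0 so the quotient is +oo. If w2 = w3 = 0, kappa_0 = oo. *)
Definition kappa0 (w : vec3) : Rbar :=
  if Req_EM_T (v3 w) 0 then p_infty
  else Finite (Q0 w / v3 w ^ 2).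

Definition kappa_gen (w : vec3) : R :=
  if Rbar_lt_dec (Rbar_abs (kappa0 w)) 1 then
    (if Rbar_lt_dec (Rbar_abs (rho w)) 2 then real (Rbar_abs (kappa0 w)) else 1)
  else 1.

Definition kappa (w : vec3) : R :=
  if Req_EM_T (v2 w) 0 then
    (if Req_EM_T (v3 w) 0 then 1 else kappa_gen w)
  else kappa_gen w.

(* The matrix a_t u_r preserves Q0 and multiplies w3 by e^(-t).  So where
   w3 <> 0 it multiplies kappa0 by e^(2t) and maps rho to e^t (rho - r).
   If kappa (a_t u_r w) < 1, then |kappa0 w| < e^(-2t) and
   |rho w - r| < 2 e^(-t) <= 1, which forces kappa w = |kappa0 w|, hence
   kappa (a_t u_r w) = e^(2t) kappa w.  The two inequalities follow by
   splitting on whether kappa (a_t u_r w) < 1. *)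
From Stdlib Require Import Reals Lra Psatz.
From Coquelicot Require Import Coquelicot.
Open Scope R_scope.

Definition kappa0R (w : vec3) : R := Q0 w / v3 w ^ 2.
Definition rhoR (w : vec3) : R := - v2 w / v3 w.

Lemma kappa0_finite (w : vec3) : v3 w <> 0 -> kappa0 w = Finite (kappa0R w).
Proof. intro Hw3. unfold kappa0. destruct (Req_EM_T (v3 w) 0); easy. Qed.

Lemma rho_finite (w : vec3) : v3 w <> 0 -> rho w = Finite (rhoR w).
Proof. intro Hw3. unfold rho. destruct (Req_EM_T (v3 w) 0); easy. Qed.

Lemma kappa_kappa_gen (w : vec3) : v3 w <> 0 -> kappa w = kappa_gen w.
Proof.
  intro Hw3. unfold kappa.
  destruct (Req_EM_T (v2 w) 0), (Req_EM_T (v3 w) 0); easy.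
Qed.

Lemma kappa_v3_eq0 (w : vec3) : v3 w = 0 -> kappa w = 1.
Proof.
  intro Hw3.
  assert (Hgen : kappa_gen w = 1).
  { unfold kappa_gen, kappa0.
    destruct (Req_EM_T (v3 w) 0) as [_ | ]; [| contradiction].
    destruct (Rbar_lt_dec _ 1) as [Hlt | ]; [now simpl in Hlt | reflexivity]. }
  unfold kappa. destruct (Req_EM_T (v2 w) 0), (Req_EM_T (v3 w) 0); easy.
Qed.

Lemma kappa_v3_neq0 (w : vec3) : v3 w <> 0 ->
  kappa w = if Rlt_dec (Rabs (kappa0R w)) 1 then
              if Rlt_dec (Rabs (rhoR w)) 2 then Rabs (kappa0R w) else 1
            else 1.
Proof.
  intro Hw3.
  rewrite (kappa_kappa_gen w Hw3). unfold kappa_gen.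
  rewrite (kappa0_finite w Hw3), (rho_finite w Hw3).
  destruct (Rbar_lt_dec _ 1), (Rlt_dec (Rabs (kappa0R w)) 1);
    simpl in *; try contradiction; try reflexivity.
  destruct (Rbar_lt_dec _ 2), (Rlt_dec (Rabs (rhoR w)) 2);
    simpl in *; easy.
Qed.

Lemma kappa_lt_1 (w : vec3) : kappa w < 1 ->
  v3 w <> 0 /\ Rabs (kappa0R w) < 1 /\ Rabs (rhoR w) < 2 /\
  kappa w = Rabs (kappa0R w).
Proof.
  intro Hlt.
  destruct (Req_dec (v3 w) 0) as [Hw3 | Hw3].
  - rewrite (kappa_v3_eq0 w Hw3) in Hlt. lra.
  - rewrite (kappa_v3_neq0 w Hw3) in *.
    destruct (Rlt_dec (Rabs (kappa0R w)) 1), (Rlt_dec (Rabs (rhoR w)) 2);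
      tauto || lra.
Qed.

Lemma kappa_abs_kappa0 (w : vec3) :
  v3 w <> 0 -> Rabs (kappa0R w) < 1 -> Rabs (rhoR w) < 2 ->
  kappa w = Rabs (kappa0R w).
Proof.
  intros Hw3 Hk Hr. rewrite (kappa_v3_neq0 w Hw3).
  destruct (Rlt_dec (Rabs (kappa0R w)) 1), (Rlt_dec (Rabs (rhoR w)) 2); easy.
Qed.

Lemma Q0_a_act (t : R) (w : vec3) : Q0 (a_act t w) = Q0 w.
Proof.
  unfold Q0, a_act, v1, v2, v3; simpl. rewrite exp_Ropp.
  assert (exp t <> 0) by apply Rgt_not_eq, exp_pos.
  field. assumption.
Qed.

Lemma Q0_u_act (r : R) (w : vec3) : Q0 (u_act r w) = Q0 w.
Proof. unfold Q0, u_act, v1, v2, v3; simpl. field. Qed.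

Lemma v2_a_act (t : R) (w : vec3) : v2 (a_act t w) = v2 w.
Proof. unfold a_act, v2; simpl. ring. Qed.

Lemma v3_a_act (t : R) (w : vec3) : v3 (a_act t w) = exp (- t) * v3 w.
Proof. unfold a_act, v3; simpl. ring. Qed.

Lemma v2_u_act (r : R) (w : vec3) : v2 (u_act r w) = v2 w + r * v3 w.
Proof. unfold u_act, v2, v3; simpl. ring. Qed.

Lemma v3_u_act (r : R) (w : vec3) : v3 (u_act r w) = v3 w.
Proof. unfold u_act, v3; simpl. ring. Qed.

Section Orbit.

Variables (t r : R) (w : vec3).
Hypothesis Hw3 : v3 w <> 0.

Let x := a_act t (u_act r w).

Lemma kappa0R_orbit : kappa0R x = exp (2 * t) * kappa0R w.
Proof.
  unfold kappa0R, x. rewrite Q0_a_act, Q0_u_act, v3_a_act, v3_u_act, exp_Ropp.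
  replace (2 * t) with (t + t) by ring. rewrite exp_plus.
  assert (exp t <> 0) by apply Rgt_not_eq, exp_pos.
  field. auto.
Qed.

Lemma rhoR_orbit : rhoR x = exp t * (rhoR w - r).
Proof.
  unfold rhoR, x. rewrite v2_a_act, v3_a_act, v2_u_act, v3_u_act, exp_Ropp.
  assert (exp t <> 0) by apply Rgt_not_eq, exp_pos.
  field. auto.
Qed.

End Orbit.

Lemma kappa_orbit_lt_1 (t r : R) (w : vec3) :
  2 <= exp t -> -1 <= r <= 1 ->
  kappa (a_act t (u_act r w)) < 1 ->
  kappa (a_act t (u_act r w)) = exp (2 * t) * kappa w.
Proof.
  intros Hexp Hr Hlt.
  destruct (kappa_lt_1 _ Hlt) as (Hx3 & Hk & Hrho & ->).
  assert (Hw3 : v3 w <> 0).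
  { intro Hw3. apply Hx3. rewrite v3_a_act, v3_u_act, Hw3. ring. }
  rewrite (kappa0R_orbit t r w Hw3) in *. rewrite (rhoR_orbit t r w Hw3) in Hrho.
  assert (He2 : exp (2 * t) = exp t * exp t)
    by (rewrite <- exp_plus; f_equal; ring).
  rewrite Rabs_mult, (Rabs_pos_eq (exp (2 * t))) in Hk |- * by (left; apply exp_pos).
  rewrite Rabs_mult, (Rabs_pos_eq (exp t)) in Hrho by (left; apply exp_pos).
  assert (Hk' : Rabs (kappa0R w) < 1).
  { pose proof (Rabs_pos (kappa0R w)). nra. }
  assert (Hrho' : Rabs (rhoR w) < 2).
  { assert (Hshift : Rabs (rhoR w - r) < 1)
      by (pose proof (Rabs_pos (rhoR w - r)); nra).
    apply Rabs_def2 in Hshift. apply Rabs_def1; lra. }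
  now rewrite (kappa_abs_kappa0 w Hw3 Hk' Hrho').
Qed.

Lemma exp_ge_2 (t : R) : 1 <= t -> 2 <= exp t.
Proof.
  intro Ht. assert (1 + t < exp t) by (apply exp_ineq1; lra). lra.
Qed.

Theorem lemma3p7 (t r : R) (w : vec3) :
  1 <= t -> -1 <= r <= 1 -> w <> (0, 0, 0) ->
  (exp (-2 * t) <= kappa w -> 1 <= kappa (a_act t (u_act r w))) /\
  (kappa w < exp (-2 * t) -> exp (2 * t) * kappa w <= kappa (a_act t (u_act r w))) /\
  (kappa (a_act t (u_act r w)) < 1 -> kappa (a_act t (u_act r w)) = exp (2 * t) * kappa w).
Proof.
  intros Ht Hr _.
  pose proof (kappa_orbit_lt_1 t r w (exp_ge_2 t Ht) Hr) as Horbit.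
  set (x := a_act t (u_act r w)) in *.
  assert (Hpos : 0 < exp (2 * t)) by apply exp_pos.
  assert (Hinv : exp (2 * t) * exp (-2 * t) = 1)
    by (rewrite <- exp_plus, <- exp_0; f_equal; ring).
  split; [| split]; [| | exact Horbit].
  - intro Hge. destruct (Rlt_or_le (kappa x) 1) as [Hlt | ]; [| assumption].
    rewrite (Horbit Hlt). rewrite <- Hinv. now apply Rmult_le_compat_l; [left |].
  - intro Hlt. destruct (Rlt_or_le (kappa x) 1) as [Hx | Hx].
    + now rewrite (Horbit Hx).
    + assert (exp (2 * t) * kappa w < 1) by (rewrite <- Hinv; now apply Rmult_lt_compat_l).
      lra.
Qed.
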